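(* Let $M,N$ be weights of $\mathbb{R}^m,\mathbb{R}^n$, let $A\in\mathbb{R}^{m\times n}$ with $MA=AN$, and let $K\subseteq\mathbb{R}^n$ be a closed cone. If $$(A^{[*]}\circ A)^{[\dagger]}\circ K^{[*]}\subseteq K+\mathcal{N}(A\circ I),$$ then $$K^{[*]}\cap\mathcal{R}\big((A\circ I)^{[*]}\big)\subseteq A^{[*]}\circ A\circ K+\mathcal{N}(A\circ I).$$
   Context: A weight is a real symmetric matrix $W$ with $W^2=I$. $\mathbb{R}^m$ and $\mathbb{R}^n$ carry weights $M\in\mathbb{R}^{m\times m}$ and $N\in\mathbb{R}^{n\times n}$, respectively. The indefinite inner product on the space with weight $W$ is $[x,y]=\langle x,Wy\rangle$. Indefinite matrix product: if $B$ has $p$ columns and $C$ has $p$ rows (or is a vector in $\mathbb{R}^p$), $p\in\{m,n\}$, and $W$ is the weight of $\mathbb{R}^p$, then $B\circ C:=BWC$. $I$ denotes an identity matrix of the appropriate size. Indefinite adjoint of $B\in\mathbb{R}^{p\times q}$: $B^{[*]}:=W_qB^TW_p$, where $W_p,W_q$ are the weights of $\mathbb{R}^p,\mathbb{R}^q$. Indefinite Moore–Penrose inverse: for $B\in\mathbb{R}^{p\times q}$, $B^{[\dagger]}$ is the unique $X\in\mathbb{R}^{q\times p}$ such that - $B\circ X\circ B=B$, - $X\circ B\circ X=X$, - $(B\circ X)^{[*]}=B\circ X$, - $(X\circ B)^{[*]}=X\circ B$. It equals $W_qB^\dagger W_p$. Range and null space: for a matrix $B$ with $q$ columns, $\mathcal{R}(B)=\{B\circ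 x:x\in\mathbb{R}^q\}$ and $\mathcal{N}(B)=\{x\in\mathbb{R}^q:B\circ x=0\}$. A cone is a nonempty set closed under addition and under multiplication by nonnegative scalars. For $S$ a subset of $\mathbb{R}^p$ with weight $W$, the dual is $S^{[*]}=\{x\in\mathbb{R}^p:[x,t]\ge0\ \forall t\in S\}$. For a matrix $B$ and a set $S$, $B\circ S=\{B\circ s:s\in S\}$. The sum of sets is the Minkowski sum. *)

(* Real numbers are modelled by an arbitrary realFieldType R; vectors of R^p are column vectors 'cV[R]_p. *)
From HB Require Import structures.
From mathcomp Require Import all_boot all_order all_algebra.
Set Implicit Arguments. Unset Strict Implicit. Unset Printing Implicit Defensive.
Import Order.TTheory GRing.Theory Num.Theory.
Local Open Scope ring_scope.

Definition is_weight (R : realFieldType) (p : nat) (W : 'M[R]_p) : Prop :=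
  W^T = W /\ W *m W = 1%:M.

Definition iinner (R : realFieldType) (p : nat) (W : 'M[R]_p) (x y : 'cV[R]_p) : R :=
  (x^T *m W *m y) 0 0.

Definition imul (R : realFieldType) (a p b : nat) (W : 'M[R]_p)
  (B : 'M[R]_(a, p)) (C : 'M[R]_(p, b)) : 'M[R]_(a, b) := B *m W *m C.

Definition iadj (R : realFieldType) (p q : nat) (Wp : 'M[R]_p) (Wq : 'M[R]_q)
  (B : 'M[R]_(p, q)) : 'M[R]_(q, p) := Wq *m B^T *m Wp.

Definition is_iMP (R : realFieldType) (p q : nat) (Wp : 'M[R]_p) (Wq : 'M[R]_q)
  (B : 'M[R]_(p, q)) (X : 'M[R]_(q, p)) : Prop :=
  [/\ imul Wp (imul Wq B X) B = B,
      imul Wq (imul Wp X B) X = X,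
      iadj Wp Wp (imul Wq B X) = imul Wq B X
    & iadj Wq Wq (imul Wp X B) = imul Wp X B].

Definition vset (R : realFieldType) (p : nat) := 'cV[R]_p -> Prop.

Definition vsubset (R : realFieldType) (p : nat) (S T : vset R p) : Prop :=
  forall x, S x -> T x.

Definition irange (R : realFieldType) (a q : nat) (W : 'M[R]_q) (B : 'M[R]_(a, q))
  : vset R a := fun y => exists x : 'cV[R]_q, y = imul W B x.

Definition inull (R : realFieldType) (a q : nat) (W : 'M[R]_q) (B : 'M[R]_(a, q))
  : vset R q := fun x => imul W B x = 0.

Definition imul_set (R : realFieldType) (a q : nat) (W : 'M[R]_q) (B : 'M[R]_(a, q))
  (S : vset R q) : vset R a := fun y => exists2 s, S s & y = imul W B s.

Definition msum (R : realFieldType) (p : nat) (S T : vset R p) : vset R p :=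
  fun x => exists s t, [/\ S s, T t & x = s + t].

Definition inter (R : realFieldType) (p : nat) (S T : vset R p) : vset R p :=
  fun x => S x /\ T x.

Definition idual (R : realFieldType) (p : nat) (W : 'M[R]_p) (S : vset R p)
  : vset R p := fun x => forall t, S t -> 0 <= iinner W x t.

Definition is_cone (R : realFieldType) (p : nat) (K : vset R p) : Prop :=
  [/\ exists x, K x,
      forall x y, K x -> K y -> K (x + y)
    & forall (c : R) x, 0 <= c -> K x -> K (c *: x)].

(* Topologically closed (w.r.t. the sup-norm, equivalent to the Euclidean
   topology on R^p). *)
Definition is_closed (R : realFieldType) (p : nat) (K : vset R p) : Prop :=
  forall x : 'cV[R]_p,
    (forall e : R, 0 < e -> exists2 y, K y & forall i, `|x i 0 - y i 0| < e) ->
    K x.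

From mathcomp Require Import all_boot all_order all_algebra.
Import GRing.Theory Num.Theory.
Set Implicit Arguments.
Unset Strict Implicit.

Local Open Scope ring_scope.

(* When [M A = A N] the indefinite adjoint of [A] is its transpose, [A o I]
   is [A N], its null space is [ker A] and the range of its adjoint is the
   range of [N A^T].  With [G = A^[*] o A = N A^T A], the first Penrose
   equation [G o X o G = G] says that [G o X] fixes the range of [G], which
   over an ordered field is the range of [N A^T].  So for [y] in that range
   and in [K^[*]], writing [X o y = k + z] with [k] in [K] and [A z = 0] gives
   [y = G o k]. *)

Lemma mulmx_trmx_eq0 (R : realFieldType) (a b : nat) (E : 'M[R]_(a, b)) :
  E *m E^T = 0 -> E = 0.
Proof.
move=> EEt0; apply/matrixP => i j; rewrite mxE.
have : (E *m E^T) i i = 0 by rewrite EEt0 mxE.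
rewrite mxE => /psumr_eq0P /(_ j isT); rewrite mxE.
have sqr_ge0k k : 0 <= E i k * E^T k i by rewrite mxE -expr2 sqr_ge0.
by move=> /(_ (fun k _ => sqr_ge0k k)) /eqP; rewrite mulf_eq0 orbb => /eqP.
Qed.

Lemma mulmx_trmx_fix (R : realFieldType) (p q : nat)
    (P : 'M[R]_q) (B : 'M[R]_(p, q)) :
  P *m (B^T *m B) = B^T *m B -> P *m B^T = B^T.
Proof.
move=> PBB; apply/eqP; rewrite -subr_eq0; apply/eqP/mulmx_trmx_eq0.
have -> : P *m B^T - B^T = (P - 1%:M) *m B^T by rewrite mulmxBl mul1mx.
by rewrite trmx_mul trmxK !mulmxA -(mulmxA _ _ B) mulmxBl PBB mul1mx subrr mul0mx.
Qed.

Lemma imulBr (R : realFieldType) (a p b : nat) (W : 'M[R]_p)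
    (B : 'M[R]_(a, p)) (C D : 'M[R]_(p, b)) :
  imul W B (C - D) = imul W B C - imul W B D.
Proof. exact: mulmxBr. Qed.

Section WeightedMatrix.

Variables (R : realFieldType) (m n : nat).
Variables (M : 'M[R]_m) (N : 'M[R]_n) (A : 'M[R]_(m, n)).
Hypotheses (weightM : is_weight M) (weightN : is_weight N).
Hypothesis MA_AN : M *m A = A *m N.

Lemma trmx_weight_comm : A^T *m M = N *m A^T.
Proof.
case: weightM weightN => MT _ [NT _].
by rewrite -{1}MT -NT -!trmx_mul MA_AN.
Qed.

Lemma iadj_weight_comm : iadj M N A = A^T.
Proof.
by case: weightN => _ NN; rewrite /iadj -mulmxA trmx_weight_comm mulmxA NN mul1mx.
Qed.

Lemma imul_gram : imul M (iadj M N A) A = N *m (A^T *m A).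
Proof. by rewrite iadj_weight_comm /imul trmx_weight_comm mulmxA. Qed.

Lemma inull_imul1 (z : 'cV[R]_n) : inull N (imul N A 1%:M) z <-> A *m z = 0.
Proof.
by case: weightN => _ NN; rewrite /inull /imul mulmx1 -(mulmxA A) NN mulmx1.
Qed.

Lemma irange_iadj_imul1 (y : 'cV[R]_n) :
  irange M (iadj M N (imul N A 1%:M)) y -> exists x, y = N *m (A^T *m x).
Proof.
case: weightN => NT NN; move=> [x ->]; exists (M *m x).
rewrite /imul /iadj mulmx1 trmx_mul NT !mulmxA NN mul1mx trmx_weight_comm.
by rewrite -!mulmxA.
Qed.

Lemma imul_gram_null (z : 'cV[R]_n) :
  A *m z = 0 -> imul N (N *m (A^T *m A)) z = 0.
Proof.
by move=> Az0; rewrite /imul -!mulmxA (mulmxA A) -MA_AN -mulmxA Az0 !mulmx0.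
Qed.

Lemma iMP_gram_fix_range (X : 'M[R]_n) (x : 'cV[R]_m) :
  is_iMP N N (imul M (iadj M N A) A) X ->
  imul N (N *m (A^T *m A)) (imul N X (N *m (A^T *m x))) = N *m (A^T *m x).
Proof.
case: weightN => _ NN; rewrite imul_gram; case=> GXG _ _ _.
move: GXG; rewrite /imul !mulmxA.
set Q := N *m A^T *m A *m N *m X *m N; clearbody Q => QG.
have NQN_fix : N *m Q *m N *m A^T = A^T.
  apply: mulmx_trmx_fix.
  have -> : N *m Q *m N *m (A^T *m A) = N *m (Q *m N *m A^T *m A).
    by rewrite !mulmxA.
  by rewrite QG !mulmxA NN mul1mx.
by rewrite -{2}NQN_fix !mulmxA NN mul1mx.
Qed.

End WeightedMatrix.

Theorem lemma3p13 (R : realFieldType) (m n : nat)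
  (M : 'M[R]_m) (N : 'M[R]_n) (A : 'M[R]_(m, n)) (K : vset R n)
  (X : 'M[R]_n) :
  is_weight M -> is_weight N -> M *m A = A *m N ->
  is_cone K -> is_closed K ->
  (* X = (A^[*] o A)^[dagger] *)
  is_iMP N N (imul M (iadj M N A) A) X ->
  vsubset (imul_set N X (idual N K))
         (msum K (inull N (imul N A 1%:M))) ->
  vsubset (inter (idual N K) (irange M (iadj M N (imul N A 1%:M))))
         (msum (imul_set N (imul M (iadj M N A) A) K) (inull N (imul N A 1%:M))).
Proof.
move=> wM wN MA_AN _ _ XiMP dualX_sub y [Ky /(irange_iadj_imul1 wM wN MA_AN)[x yE]].
have [k [z [Kk /(inull_imul1 A wN)Az0 Xy_kz]]] :=
  dualX_sub (imul N X y) (ex_intro2 _ _ y Ky erefl).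
exists (imul N (imul M (iadj M N A) A) k), 0; split.
- by exists k.
- by rewrite /inull /imul mulmx0.
have -> : k = imul N X y - z by rewrite Xy_kz addrK.
rewrite addr0 (imul_gram wM wN MA_AN) imulBr (imul_gram_null MA_AN Az0).
by rewrite subr0 yE (iMP_gram_fix_range wM wN MA_AN x XiMP).
Qed.
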